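(* Fix a parameter space $W$, a data space $X$, an update rule $g: W\times X\to W$, a metric $d$ on $W$ and initial parameters $\mathbf{w}_0\in W$. Let $D, D'\subseteq X$ be datasets that are forgeable with $\epsilon=0$. Then $H_D(w)=H_{D'}(w)$.
   Context: A valid $(g,d,\epsilon)$ log is a sequence $\{(\mathbf{w}_i,\mathbf{x}_i)\}_{i\in J}$ ($J$ a countable index set, consecutive indices) of parameter/data-point pairs such that $d(\mathbf{w}_{i+1}, g(\mathbf{w}_i,\mathbf{x}_i))\le \epsilon$ for all $i\in J$. For a dataset $D$, $H_{D,g,d,\epsilon}$ denotes the set of all valid $(g,d,\epsilon)$ logs starting from the fixed $\mathbf{w}_0$ whose data points $\mathbf{x}_i$ all lie in $D$. A forging map from $D$ to $D'$ (with $\epsilon$) is a map $B: H_{D,g,d,0}\to H_{D',g,d,\epsilon}$ of the form $B(\{(\mathbf{w}_i,\mathbf{x}_i)\}_{i\in J})=\{(\mathbf{w}_i,\tilde{\mathbf{x}}_i)\}_{i\in J}$ (identity on the parameters, data points replaced by $\tilde{\mathbf{x}}_i\in D'$, the result being a valid $(g,d,\epsilon)$ log). $D'$ forges $D$ with $\epsilon$ if such a map exists; $D$ and $D'$ are forgeable with $\epsilon$ if $D'$ forges $D$ with $\epsilon$ and $D$ forges $D'$ with $\epsilon$. $H_D(w)$ denotes the set of all parameters $\mathbf{w}_i$ appearing in logs in $H_{D,g,d,0}$ (and similarly $H_{D'}(w)$). *)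

From Stdlib Require Import Reals.
Open Scope R_scope.

Definition is_metric {W : Type} (d : W -> W -> R) : Prop :=
  (forall x y, 0 <= d x y) /\
  (forall x y, d x y = 0 <-> x = y) /\
  (forall x y, d x y = d y x) /\
  (forall x y z, d x z <= d x y + d y z).

(* A log indexed by consecutive indices J = {0,...,n-1} (len = Some n)
   or J = nat (len = None); (ws i, xs i) is the i-th pair. *)
Record Log (W X : Type) := mkLog {
  len : option nat;
  ws : nat -> W;
  xs : nat -> X }.
Arguments mkLog {W X}.
Arguments len {W X}.
Arguments ws {W X}.
Arguments xs {W X}.

Definition in_J {W X} (L : Log W X) (i : nat) : Prop :=
  match len L with Some n => (i < n)%nat | None => True end.

Definition valid_log {W X} (g : W -> X -> W) (d : W -> W -> R) (eps : R)
  (L : Log W X) : Prop :=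
  forall i, in_J L i -> in_J L (S i) -> d (ws L (S i)) (g (ws L i) (xs L i)) <= eps.

Definition in_H {W X} (g : W -> X -> W) (d : W -> W -> R) (eps : R) (w0 : W)
  (D : X -> Prop) (L : Log W X) : Prop :=
  valid_log g d eps L /\ (in_J L 0 -> ws L 0 = w0) /\
  (forall i, in_J L i -> D (xs L i)).

(* D' forges D with eps: a forging map B : H_{D,g,d,0} -> H_{D',g,d,eps},
   identity on parameters (same index set, same w_i). *)
Definition forges {W X} (g : W -> X -> W) (d : W -> W -> R) (eps : R) (w0 : W)
  (D' D : X -> Prop) : Prop :=
  exists B : Log W X -> Log W X,
    forall L, in_H g d 0 w0 D L ->
      in_H g d eps w0 D' (B L) /\ len (B L) = len L /\
      (forall i, in_J L i -> ws (B L) i = ws L i).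

Definition forgeable {W X} (g : W -> X -> W) (d : W -> W -> R) (eps : R) (w0 : W)
  (D D' : X -> Prop) : Prop :=
  forges g d eps w0 D' D /\ forges g d eps w0 D D'.

Definition H_w {W X} (g : W -> X -> W) (d : W -> W -> R) (w0 : W)
  (D : X -> Prop) (w : W) : Prop :=
  exists L, in_H g d 0 w0 D L /\ exists i, in_J L i /\ ws L i = w.

(* A forging map keeps every parameter of a log in place, so each parameter
   reached by a log with data in D is reached by a log with data in D'; with
   eps = 0 that forged log is again exact, and forgeability in both
   directions gives the two inclusions. *)

From Stdlib Require Import Reals.
Open Scope R_scope.

Lemma in_J_same_len {W X} (L L' : Log W X) (i : nat) :
  len L' = len L -> in_J L i -> in_J L' i.
Proof.
  intros Hlen Hi. unfold in_J in *. rewrite Hlen. exact Hi.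
Qed.

Lemma forges_preserves_params {W X} (g : W -> X -> W) (d : W -> W -> R)
  (eps : R) (w0 : W) (D D' : X -> Prop) :
  forges g d eps w0 D' D ->
  forall w, H_w g d w0 D w ->
  exists L', in_H g d eps w0 D' L' /\ exists i, in_J L' i /\ ws L' i = w.
Proof.
  intros [B HB] w [L [HL [i [Hi Hw]]]].
  destruct (HB L HL) as [HBL [Hlen Hws]].
  exists (B L). split; [exact HBL |].
  exists i. split.
  - exact (in_J_same_len L (B L) i Hlen Hi).
  - rewrite Hws by exact Hi. exact Hw.
Qed.

Lemma forges_H_w_incl {W X} (g : W -> X -> W) (d : W -> W -> R) (w0 : W)
  (D D' : X -> Prop) :
  forges g d 0 w0 D' D -> forall w, H_w g d w0 D w -> H_w g d w0 D' w.
Proof.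
  exact (forges_preserves_params g d 0 w0 D D').
Qed.

Theorem lemma1 (W X : Type) (g : W -> X -> W) (d : W -> W -> R)
  (hd : is_metric d) (w0 : W) (D D' : X -> Prop) :
  forgeable g d 0 w0 D D' ->
  forall w, H_w g d w0 D w <-> H_w g d w0 D' w.
Proof.
  intros [Hforges' Hforges] w. split.
  - exact (forges_H_w_incl g d w0 D D' Hforges' w).
  - exact (forges_H_w_incl g d w0 D' D Hforges w).
Qed.
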